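(* Let $G$ be a group with identity $e$, $A$ a set with at least two elements, and $\tau: A^G\to A^G$ a lazy cellular automaton with unique active transition $p \in A^S$ and writing symbol $a \in A$. Let $i,j \in\mathbb{N}$ with $i\leq j$. Then: \begin{enumerate} \item $\mathrm{supp}_a(\tau^i(x))\subseteq \mathrm{supp}_a(\tau^{j}(x))$ for all $x \in A^G$; \item $\mathrm{supp}_b(\tau^{i}(x))\supseteq \mathrm{supp}_b(\tau^{j}(x))$ for all $x \in A^G$ and all $b\in A\setminus\{a\}$; \item if $\mathrm{supp}_a(x) = \mathrm{supp}_a(\tau(x))$ for some $x \in A^G$, then $x= \tau(x)$. \end{enumerate}
   Context: $A^G$ is the set of maps $G \to A$ with shift action $(g\cdot x)(h) := x(hg)$. A cellular automaton is a map $\tau : A^G \to A^G$ with a finite $S \subseteq G$ and $\mu : A^S \to A$ such that $\tau(x)(g) = \mu((g\cdot x)|_S)$. $\tau$ is lazy with unique active transition $p \in A^S$ if there is such a local defining map $\mu : A^S \to A$ with $e \in S$ such that for all $z \in A^S$: $\mu(z) = z(e)$ iff $z \neq p$; its writing symbol is $a := \mu(p) \neq p(e)$. For $x \in A^G$ and $b \in A$, $\mathrm{supp}_b(x) := \{g \in G : x(g) = b\}$. $\tau^n$ is the $n$-fold composition, $\tau^0$ the identity, $\mathbb{N} = \{0,1,2,\dots\}$. *)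

(* G is an arbitrary (possibly infinite) group, given by its
   carrier and operations, with the group axioms as hypotheses of the theorem. *)
From Stdlib Require Import List.
Set Implicit Arguments.

Definition is_group (G : Type) (mul : G -> G -> G) (e : G) (inv : G -> G) : Prop :=
  (forall x y z, mul (mul x y) z = mul x (mul y z)) /\
  (forall x, mul e x = x) /\ (forall x, mul x e = x) /\
  (forall x, mul (inv x) x = e) /\ (forall x, mul x (inv x) = e).

(* Configurations: A^G = G -> A.  Shift action (g . x)(h) = x(h g). *)
Definition shift (G A : Type) (mul : G -> G -> G) (g : G) (x : G -> A) : G -> A :=
  fun h => x (mul h g).

(* The finite set S is given by a list; A^S is the type of functions on the
   subtype of elements of S. *)
Definition elt (G : Type) (S : list G) := { g : G | In g S }.

Definition restrict (G A : Type) (S : list G) (x : G -> A) : elt S -> A :=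
  fun s => x (proj1_sig s).

Definition local_rule (G A : Type) (mul : G -> G -> G) (S : list G)
  (mu : (elt S -> A) -> A) (tau : (G -> A) -> (G -> A)) : Prop :=
  forall x g, tau x g = mu (@restrict G A S (shift mul g x)).

Definition lazy_ca (G A : Type) (mul : G -> G -> G) (e : G) (S : list G)
  (eS : In e S) (mu : (elt S -> A) -> A) (p : elt S -> A) (a : A)
  (tau : (G -> A) -> (G -> A)) : Prop :=
  local_rule mul mu tau /\
  (forall z : elt S -> A, mu z = z (exist _ e eS) <-> z <> p) /\
  a = mu p.

Definition supp (G A : Type) (b : A) (x : G -> A) : G -> Prop := fun g => x g = b.

Definition subset_set (G : Type) (P Q : G -> Prop) : Prop := forall g, P g -> Q g.

(* A lazy automaton changes a cell only by writing [a] into it: wherever the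
   local pattern is not [p], the local map returns the current symbol. *)
From Stdlib Require Import List Classical FunctionalExtensionality.
Set Implicit Arguments.

Lemma lazy_ca_keeps_or_writes (G A : Type) (mul : G -> G -> G) (e : G)
  (mul1g : forall g, mul e g = g)
  (S : list G) (eS : In e S) (mu : (elt S -> A) -> A) (p : elt S -> A) (a : A)
  (tau : (G -> A) -> (G -> A)) :
  lazy_ca mul e eS mu p a tau -> forall x g, tau x g = x g \/ tau x g = a.
Proof.
  intros [Hloc [Hlazy ->]] x g.
  rewrite Hloc.
  destruct (classic (restrict (shift mul g x) = p)) as [Hp | Hp].
  - right; now rewrite Hp.
  - left; apply Hlazy in Hp; rewrite Hp.
    unfold restrict, shift; simpl.
    now rewrite mul1g.
Qed.

Section WritingOnly.

Context {G A : Type} {a : A} {f : (G -> A) -> (G -> A)}.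
Hypothesis f_cell : forall x g, f x g = x g \/ f x g = a.

Lemma supp_writing_iter_mono (x : G -> A) (i j : nat) :
  i <= j -> subset_set (supp a (Nat.iter i f x)) (supp a (Nat.iter j f x)).
Proof.
  intros hij g Hg.
  induction hij as [| j _ IH]; [exact Hg |].
  unfold supp in *; simpl.
  destruct (f_cell (Nat.iter j f x) g) as [-> | ->]; auto.
Qed.

Lemma supp_other_iter_antitone (x : G -> A) (b : A) (i j : nat) :
  b <> a -> i <= j -> subset_set (supp b (Nat.iter j f x)) (supp b (Nat.iter i f x)).
Proof.
  intros hba hij g.
  induction hij as [| j _ IH]; [easy |].
  unfold supp in *; simpl; intros Hg.
  apply IH.
  destruct (f_cell (Nat.iter j f x) g) as [E | E]; rewrite E in Hg; congruence.
Qed.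

Lemma fixpoint_of_supp_writing_eq (x : G -> A) :
  (forall g, supp a x g <-> supp a (f x) g) -> x = f x.
Proof.
  intros Hx; apply functional_extensionality; intros g.
  destruct (f_cell x g) as [E | E]; [easy |].
  rewrite E; exact (proj2 (Hx g) E).
Qed.

End WritingOnly.

Theorem lemma3 (G : Type) (mul : G -> G -> G) (e : G) (inv : G -> G)
  (HG : is_group mul e inv)
  (A : Type) (HA : exists a1 a2 : A, a1 <> a2)
  (S : list G) (eS : In e S) (mu : (elt S -> A) -> A) (p : elt S -> A) (a : A)
  (tau : (G -> A) -> (G -> A))
  (Htau : @lazy_ca G A mul e S eS mu p a tau)
  (i j : nat) (hij : i <= j) :
  (forall x : G -> A,
     subset_set (@supp G A a (Nat.iter i tau x)) (@supp G A a (Nat.iter j tau x))) /\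
  (forall (x : G -> A) (b : A), b <> a ->
     subset_set (@supp G A b (Nat.iter j tau x)) (@supp G A b (Nat.iter i tau x))) /\
  (forall x : G -> A,
     (forall g, supp a x g <-> @supp G A a (tau x) g) -> x = tau x).
Proof.
  destruct HG as (_ & mul1g & _).
  pose proof (lazy_ca_keeps_or_writes mul1g Htau) as tau_cell.
  split; [| split].
  - intros x; exact (supp_writing_iter_mono tau_cell x hij).
  - intros x b hba; exact (supp_other_iter_antitone tau_cell x hba hij).
  - exact (fixpoint_of_supp_writing_eq tau_cell).
Qed.
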